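(* Let $A \in \mathbb{R}^{m \times r}$, $b \in \mathbb{R}^m$, let $P = \{ x \in \mathbb{R}^r \mid Ax \ge b\}$ be a polyhedron and $C^r = \{ x \in \mathbb{R}^r \mid Ax \ge 0\}$ its recession cone. Every vector $x \in P$ is a conformal sum of elementary vectors of $P$; that is, there exist finite sets $E_0 \subseteq C^r$ and $E_1 \subseteq P$ of elementary vectors of $P$ such that \[ x = \sum_{e \in E_0} e + \sum_{e \in E_1} \lambda_e e \quad \text{with } \operatorname{sign}(e) \le \operatorname{sign}(x) \text{ for all } e \in E_0 \cup E_1, \] $\lambda_e \ge 0$, and $\sum_{e \in E_1} \lambda_e = 1$ (hence $|E_1| \ge 1$). The set $E = E_0 \cup E_1$ can be chosen such that $|E| \le \dim(P) + 1$ and $|E| \le |\operatorname{supp}(x)| + |\operatorname{supp}(Ax)| + 1$.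
   Context: For $x \in \mathbb{R}^n$, $\operatorname{supp}(x) = \{ i \mid x_i \neq 0\}$, and $\operatorname{sign}(x) \in \{-,0,+\}^n$ is obtained by applying the sign function componentwise. The relations $0 < -$ and $0 < +$ induce a componentwise partial order on $\{-,0,+\}^n$ ($-$ and $+$ incomparable). $\dim(P)$ is the dimension of the affine hull of $P$. A nonzero $x \in C^r$ is conformally non-decomposable (cND) if for all nonzero $x^1,x^2 \in C^r$ with $\operatorname{sign}(x^1),\operatorname{sign}(x^2) \le \operatorname{sign}(x)$, $x = x^1 + x^2$ implies $x^1 = \lambda x^2$ for some $\lambda > 0$. A vector $x \in P$ is convex-conformally non-decomposable (ccND) if for all $x^1,x^2 \in P$ with $\operatorname{sign}(x^1),\operatorname{sign}(x^2) \le \operatorname{sign}(x)$ and all $0<\lambda<1$, $x = \lambda x^1 + (1-\lambda) x^2$ implies $x^1 = x^2$. A vector $e \in C^r \cup P$ is an elementary vector of $P$ if either $e \in C^r$ is cND or $e \in P$ is ccND. *)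

From HB Require Import structures.
From mathcomp Require Import all_boot all_order all_algebra.
Set Implicit Arguments. Unset Strict Implicit. Unset Printing Implicit Defensive.
Import Order.TTheory GRing.Theory Num.Theory.
Local Open Scope ring_scope.

Section Defs.
Variable R : realFieldType.

Definition vge (n : nat) (u v : 'cV[R]_n) : Prop := forall i, v i 0 <= u i 0.

Definition in_polyhedron (m r : nat) (A : 'M[R]_(m, r)) (b : 'cV[R]_m) (x : 'cV[R]_r) : Prop :=
  vge (A *m x) b.

Definition rcone (m r : nat) (A : 'M[R]_(m, r)) (x : 'cV[R]_r) : Prop :=
  vge (A *m x) 0.

(* sign(y) <= sign(x) in {-,0,+}^n with 0 < -, 0 < + *)
Definition sign_le (n : nat) (y x : 'cV[R]_n) : Prop :=
  forall i, Num.sg (y i 0) = 0 \/ Num.sg (y i 0) = Num.sg (x i 0).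

Definition supp (n : nat) (x : 'cV[R]_n) : {set 'I_n} := [set i | x i 0 != 0].

Definition cND (m r : nat) (A : 'M[R]_(m, r)) (x : 'cV[R]_r) : Prop :=
  rcone A x /\ x != 0 /\
  forall x1 x2 : 'cV[R]_r, rcone A x1 -> rcone A x2 -> x1 != 0 -> x2 != 0 ->
    sign_le x1 x -> sign_le x2 x -> x = x1 + x2 ->
    exists2 l : R, 0 < l & x1 = l *: x2.

Definition ccND (m r : nat) (A : 'M[R]_(m, r)) (b : 'cV[R]_m) (x : 'cV[R]_r) : Prop :=
  in_polyhedron A b x /\
  forall (x1 x2 : 'cV[R]_r) (l : R), in_polyhedron A b x1 -> in_polyhedron A b x2 ->
    sign_le x1 x -> sign_le x2 x -> 0 < l -> l < 1 ->
    x = l *: x1 + (1 - l) *: x2 -> x1 = x2.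

Definition elementary (m r : nat) (A : 'M[R]_(m, r)) (b : 'cV[R]_m) (e : 'cV[R]_r) : Prop :=
  cND A e \/ ccND A b e.

(* dim(P) = dimension of the affine hull of S, i.e. the dimension of the
   linear span of {p - q | p, q in S}: d is the maximal rank of a finite
   family of such differences. *)
Definition affdim (r : nat) (S : 'cV[R]_r -> Prop) (d : nat) : Prop :=
  (exists k (u v : 'I_k -> 'cV[R]_r),
      (forall i, S (u i) /\ S (v i)) /\
      \rank (\matrix_(i < k) (u i - v i)^T) = d) /\
  (forall k (u v : 'I_k -> 'cV[R]_r),
      (forall i, S (u i) /\ S (v i)) ->
      (\rank (\matrix_(i < k) (u i - v i)^T) <= d)%N).

End Defs.

From HB Require Import structures.
From mathcomp Require Import all_boot all_order all_algebra.
From Stdlib Require Import Classical.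
From mathcomp Require Import lra.
Set Implicit Arguments. Unset Strict Implicit. Unset Printing Implicit Defensive.
Import Order.TTheory GRing.Theory Num.Theory.
Local Open Scope ring_scope.

(* Homogenize: the pairs (y, t) with A y >= t b, t >= 0 and sign(y) <= sign(x)
   form a pointed polyhedral cone containing (x, 1).  Every point z of a pointed
   polyhedral cone is a positive combination of linearly independent extreme
   rays: pick an extreme ray e whose tight constraints include those of z and
   subtract the largest multiple of e that stays in the cone; the remainder has
   strictly more tight constraints.  Rescaled to t = 0 or t = 1, the extreme
   rays are cND vectors of the recession cone and ccND points of P, all
   conformal to x, and their weights on the points sum to 1 because x has
   t = 1.  Independence of the k rays bounds k - 1 by the rank of the rows
   y_i - t_i y_j0 (with t_j0 = 1), which are differences of points of P and
   vanish outside supp x. *)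

Lemma col_cV (R : Type) n (v : 'cV[R]_n) (j : 'I_1) : col j v = v.
Proof. by apply/matrixP => i j'; rewrite !mxE !ord1. Qed.

Lemma mulmx_cV11 (R : comPzRingType) n (v : 'cV[R]_n) (c : 'M[R]_1) : v *m c = c 0 0 *: v.
Proof. by rewrite {1}(mx11_scalar c) mul_mx_scalar. Qed.

Section PolyhedralCone.
Variables (R : realFieldType) (n : nat) (I : finType) (f : I -> 'rV[R]_n).

Definition slack i (z : 'cV[R]_n) : R := (f i *m z) 0 0.
Definition in_cone z := forall i, 0 <= slack i z.
Definition slack_supp z := [set i | slack i z != 0].
Definition extreme_ray z :=
  [/\ in_cone z, z != 0 &
      forall a b, in_cone a -> in_cone b -> z = a + b -> exists al, a = al *: z].
Definition pointed_cone := forall z, in_cone z -> (forall i, slack i z = 0) -> z = 0.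

Lemma slackD i a b : slack i (a + b) = slack i a + slack i b.
Proof. by rewrite /slack mulmxDr mxE. Qed.

Lemma slackB i a b : slack i (a - b) = slack i a - slack i b.
Proof. by rewrite slackD /slack mulmxN !mxE. Qed.

Lemma slackZ i al a : slack i (al *: a) = al * slack i a.
Proof. by rewrite /slack -scalemxAr mxE. Qed.

Lemma slack0 i : slack i 0 = 0.
Proof. by rewrite /slack mulmx0 mxE. Qed.

Lemma slack_mulmx i k (M : 'M[R]_(n, k)) c :
  (forall j, slack i (col j M) = 0) -> slack i (M *m c) = 0.
Proof.
move=> M0; rewrite /slack mulmxA mxE big1 // => j _.
by have := M0 j; rewrite /slack colE mulmxA -colE mxE => ->; rewrite mul0r.
Qed.

Lemma in_coneZ al v : 0 <= al -> in_cone v -> in_cone (al *: v).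
Proof. by move=> al0 Kv i; rewrite slackZ mulr_ge0. Qed.

Lemma slack_suppZ al v : al != 0 -> slack_supp (al *: v) = slack_supp v.
Proof. by move=> al0; apply/setP => i; rewrite !inE slackZ mulf_eq0 (negbTE al0). Qed.

Lemma slack_supp_addl a b :
  in_cone a -> in_cone b -> slack_supp a \subset slack_supp (a + b).
Proof.
move=> Ka Kb; apply/subsetP => i; rewrite !inE slackD.
by apply: contraNN; rewrite paddr_eq0 // => /andP[].
Qed.

Lemma extreme_rayZ al v : 0 < al -> extreme_ray v -> extreme_ray (al *: v).
Proof.
move=> al0 [Kv v0 ext]; split; first exact: in_coneZ (ltW al0) Kv.
  by rewrite scaler_eq0 negb_or gt_eqF.
move=> a b Ka Kb vab.
have alV0 : 0 <= al^-1 by rewrite invr_ge0 ltW.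
have [be abe] : exists be, al^-1 *: a = be *: v.
  apply: (ext _ (al^-1 *: b)); try exact: in_coneZ.
  by rewrite -scalerDr -vab scalerA mulVf ?gt_eqF // scale1r.
exists be; rewrite scalerA mulrC -scalerA -abe scalerA mulfV ?gt_eqF ?scale1r //.
Qed.

(* Ratio test: s is the largest step keeping z - s v in the cone, and the
   minimizing constraint becomes tight. *)
Lemma slack_supp_shrink z v :
  in_cone z -> slack_supp v \subset slack_supp z -> (exists i, 0 < slack i v) ->
  exists2 s, 0 < s & in_cone (z - s *: v) /\ slack_supp (z - s *: v) \proper slack_supp z.
Proof.
move=> Kz vz [i0 vi0].
have [ks vks ks_min] : exists2 ks, 0 < slack ks v &
    forall i, 0 < slack i v -> slack ks z / slack ks v <= slack i z / slack i v.
  have := @arg_minP _ _ _ i0 (fun i => 0 < slack i v) (fun i => slack i z / slack i v) vi0.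
  by case=> ks; exists ks.
have zks : 0 < slack ks z.
  rewrite lt0r Kz andbT; have := subsetP vz ks.
  by rewrite !inE gt_eqF //; apply.
set s := slack ks z / slack ks v.
exists s; first by rewrite divr_gt0.
split.
  move=> i; rewrite slackB slackZ subr_ge0.
  case: (ltP 0 (slack i v)) => vi; first by rewrite -ler_pdivlMr // ks_min.
  by apply: le_trans (Kz i); rewrite pmulr_rle0 // divr_gt0.
apply/properP; split.
  apply/subsetP => i; rewrite !inE; apply: contraNN => /eqP zi.
  have /eqP vi : slack i v == 0.
    by move: (contra (subsetP vz i)); rewrite !inE !negbK zi eqxx; apply.
  by rewrite slackB slackZ zi vi mulr0 subrr.
exists ks; first by rewrite inE gt_eqF.
by rewrite inE slackB slackZ /s divfK ?subrr ?eqxx // gt_eqF.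
Qed.

Section Pointed.
Hypothesis pointed : pointed_cone.

Lemma exists_slack_gt0 v : in_cone v -> v != 0 -> exists i, 0 < slack i v.
Proof.
move=> Kv v0; apply: NNPP => nopos; move/eqP: v0; apply; apply: pointed => // i.
apply/le_anti; rewrite Kv andbT leNgt; apply/negP => vi.
by apply: nopos; exists i.
Qed.

Lemma extreme_ray_below z :
  in_cone z -> z != 0 -> exists e, extreme_ray e /\ slack_supp e \subset slack_supp z.
Proof.
have [N] := ubnP #|slack_supp z|; elim: N z => // N IH z zN Kz z0.
have [ez|nez] := classic (extreme_ray z); first by exists z.
have [a [b [Ka Kb zab na]]] :
    exists a b, [/\ in_cone a, in_cone b, z = a + b & forall al, a != al *: z].
  apply: NNPP => nodec; apply: nez; split=> // a b Ka Kb zab.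
  apply: NNPP => nomul; apply: nodec; exists a, b; split=> // al.
  by apply/eqP => aE; apply: nomul; exists al.
have a0 : a != 0 by have := na 0; rewrite scale0r.
have az : slack_supp a \subset slack_supp z by rewrite zab slack_supp_addl.
have [s s0 [Kz' z'z]] := slack_supp_shrink Kz az (exists_slack_gt0 Ka a0).
have z'0 : z - s *: a != 0.
  apply: contra (na s^-1) => /eqP/subr0_eq ->.
  by rewrite scalerA mulVf ?gt_eqF // scale1r.
have z'N : (#|slack_supp (z - s *: a)| < N)%N by apply: leq_trans (proper_card z'z) _.
have [e [ee ez']] := IH _ z'N Kz' z'0.
by exists e; split; last exact: subset_trans ez' (proper_sub z'z).
Qed.

Variable normal : 'cV[R]_n -> Prop.
Hypothesis normalizable : forall v, extreme_ray v -> exists2 al, 0 < al & normal (al *: v).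

Definition ray_decomposition z :=
  exists k (M : 'M[R]_(n, k)) (c : 'cV[R]_k),
    [/\ forall j, extreme_ray (col j M) /\ normal (col j M),
        forall j, 0 < c j 0,
        z = M *m c,
        forall c' : 'cV[R]_k, M *m c' = 0 -> c' = 0 &
        forall j, slack_supp (col j M) \subset slack_supp z].

Lemma ray_decomposition0 : ray_decomposition 0.
Proof.
exists 0%N, 0, 0; split; [by case | by case | by rewrite mulmx0 | | by case].
by move=> c _; apply/matrixP => -[].
Qed.

(* The peeled ray e is independent of the rays of the remainder: it does not
   vanish on a constraint that is tight for all of them. *)
Lemma ray_decomposition_cone z : in_cone z -> ray_decomposition z.
Proof.
have [N] := ubnP #|slack_supp z|; elim: N z => // N IH z zN Kz.
have [->|z0] := eqVneq z 0; first exact: ray_decomposition0.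
have [e0 [ee0 e0z]] := extreme_ray_below Kz z0.
have [al al0 ne] := normalizable ee0; set e := al *: e0 in ne.
have ee : extreme_ray e by apply: extreme_rayZ.
have ez : slack_supp e \subset slack_supp z by rewrite slack_suppZ ?gt_eqF.
have [Ke e0' _] := ee.
have [s s0 [Kz' z'z]] := slack_supp_shrink Kz ez (exists_slack_gt0 Ke e0').
have z'N : (#|slack_supp (z - s *: e)| < N)%N by apply: leq_trans (proper_card z'z) _.
have [k [M [c [rayM c0 z'E freeM M_z']]]] := IH _ z'N Kz'.
have [_ [i zi z'i]] := properP z'z.
have Mi j : slack i (col j M) = 0.
  by apply/eqP; apply: contraNT z'i => Mij; apply: (subsetP (M_z' j)); rewrite inE.
have ei : slack i e != 0.
  apply: contraNneq z'i => ei; move: zi; rewrite !inE slackB slackZ ei mulr0 subr0.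
  done.
exists (1 + k)%N, (row_mx e M), (col_mx (const_mx s) c); split.
- by move=> j; rewrite -(splitK j); case: (split j) => j' /=; rewrite ?colKl ?col_cV ?colKr.
- move=> j; rewrite -(splitK j); case: (split j) => j' /=.
    by rewrite col_mxEu mxE.
  by rewrite col_mxEd.
- by rewrite mul_row_col mulmx_cV11 mxE -z'E addrC subrK.
- move=> c'; rewrite -[c']vsubmxK mul_row_col mulmx_cV11 => c'0.
  have /eqP : slack i (usubmx c' 0 0 *: e + M *m dsubmx c') = 0 by rewrite c'0 slack0.
  rewrite slackD slackZ slack_mulmx // addr0 mulf_eq0 (negbTE ei) orbF => /eqP u0.
  move: c'0; rewrite u0 scale0r add0r => /freeM ->.
  by apply/matrixP => a j; rewrite ord1 !mxE; case: splitP => a' _; rewrite ?ord1 ?u0 ?mxE.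
- move=> j; rewrite -(splitK j); case: (split j) => j' /=; rewrite ?colKl ?col_cV ?colKr //.
  exact: subset_trans (M_z' j') (proper_sub z'z).
Qed.

End Pointed.
End PolyhedralCone.

Section SignConformal.
Variables (R : realFieldType) (n : nat).
Implicit Types x y z : 'cV[R]_n.

Lemma sign_le_refl x : sign_le x x.
Proof. by move=> i; right. Qed.

Lemma sign_le_trans x y z : sign_le x y -> sign_le y z -> sign_le x z.
Proof. by move=> xy yz i; case: (xy i) => ->; [left | exact: yz]. Qed.

Lemma sign_leZ al y x : 0 < al -> sign_le y x -> sign_le (al *: y) x.
Proof. by move=> al0 yx i; rewrite mxE sgrM gtr0_sg // mul1r; apply: yx. Qed.

Lemma sign_le_scale_gt0 al y : y != 0 -> al != 0 -> sign_le (al *: y) y -> 0 < al.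
Proof.
move=> y0 al0 le_y; have [i yi] : exists i, y i 0 != 0.
  apply/existsP; apply: contraNT y0 => /existsPn y0; apply/eqP/matrixP => i j.
  by move: (y0 i); rewrite ord1 mxE negbK => /eqP.
case: (le_y i); rewrite mxE sgrM => /eqP.
  by rewrite mulf_eq0 !sgr_eq0 (negbTE al0) (negbTE yi).
rewrite -subr_eq0 -{2}[Num.sg (y i 0)]mul1r -mulrBl mulf_eq0 sgr_eq0 (negbTE yi) orbF.
by rewrite subr_eq0 sgr_cp0.
Qed.

Lemma sg_conform_orient (u w : R) :
  (Num.sg u = 0 \/ Num.sg u = Num.sg w) <->
  0 <= (if 0 <= w then 1 else -1) * u /\ 0 <= (if w <= 0 then -1 else 1) * u.
Proof.
have [w0|w0|->] := ltrgt0P w; have [u0|u0|->] := ltrgt0P u;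
  rewrite ?sgr0 ?(gtr0_sg w0) ?(ltr0_sg w0) ?(gtr0_sg u0) ?(ltr0_sg u0) ?lexx.
all: try (split; [move=> [] h | move=> [h1 h2]]); lra.
Qed.

End SignConformal.

Section LiftedCone.
Variables (R : realFieldType) (m r : nat) (A : 'M[R]_(m, r)) (b : 'cV[R]_m) (x : 'cV[R]_r).

Definition homog (y : 'cV[R]_r) (t : R) : 'cV[R]_(r + 1) := col_mx y (const_mx t).

Definition orient_ge (i : 'I_r) : R := if 0 <= x i 0 then 1 else -1.
Definition orient_le (i : 'I_r) : R := if x i 0 <= 0 then -1 else 1.

(* (y, t) lies in this cone iff A y >= t b, t >= 0 and sign(y) <= sign(x); the
   sign condition is encoded by the rows orient_ge and orient_le, which differ
   exactly where x vanishes and there force y to vanish. *)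
Definition lifted_rows (i : option ('I_m + ('I_r + 'I_r))) : 'rV[R]_(r + 1) :=
  match i with
  | None => row_mx 0 (const_mx 1)
  | Some (inl j) => row_mx (row j A) (const_mx (- b j 0))
  | Some (inr (inl i)) => row_mx (orient_ge i *: delta_mx 0 i) 0
  | Some (inr (inr i)) => row_mx (orient_le i *: delta_mx 0 i) 0
  end.

Lemma homogK (z : 'cV[R]_(r + 1)) : homog (usubmx z) (dsubmx z 0 0) = z.
Proof.
rewrite -[RHS]vsubmxK; congr col_mx.
by apply/matrixP => i j; rewrite !ord1 !mxE.
Qed.

Lemma homogZ al y t : al *: homog y t = homog (al *: y) (al * t).
Proof. by rewrite scale_col_mx; congr col_mx; apply/matrixP => i j; rewrite !mxE. Qed.

Lemma slack_homog y t :
  [/\ slack lifted_rows None (homog y t) = t,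
      forall j, slack lifted_rows (Some (inl j)) (homog y t) = (A *m y) j 0 - b j 0 * t,
      forall i, slack lifted_rows (Some (inr (inl i))) (homog y t) = orient_ge i * y i 0 &
      forall i, slack lifted_rows (Some (inr (inr i))) (homog y t) = orient_le i * y i 0].
Proof.
have slack_row p q : (row_mx p q *m homog y t) 0 0 = (p *m y) 0 0 + q 0 0 * t.
  by rewrite mul_row_col mxE [X in _ + X]mxE big_ord1 [const_mx _ _ _]mxE.
have delta_y i : (delta_mx (0 : 'I_1) i *m y) 0 0 = y i 0 by rewrite -rowE mxE.
rewrite /slack /=; split.
- by rewrite slack_row mul0mx !mxE mul1r add0r.
- by move=> j; rewrite slack_row -row_mul !mxE mulNr.
- by move=> i; rewrite slack_row -scalemxAl mxE delta_y mxE mul0r addr0.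
- by move=> i; rewrite slack_row -scalemxAl mxE delta_y mxE mul0r addr0.
Qed.

Lemma in_lifted_cone y t :
  in_cone lifted_rows (homog y t) <->
  [/\ forall j, b j 0 * t <= (A *m y) j 0, sign_le y x & 0 <= t].
Proof.
have [sN sA sge sle] := slack_homog y t.
split=> [K | [KA Ks Kt] [[j|[i|i]]|] /=].
- split; last by rewrite -sN.
    by move=> j; have := K (Some (inl j)); rewrite sA subr_ge0.
  by move=> i; apply/sg_conform_orient; rewrite -sge -sle.
- by rewrite sA subr_ge0.
- by rewrite sge; case: (sg_conform_orient (y i 0) (x i 0)) => + _; case/(_ (Ks i)).
- by rewrite sle; case: (sg_conform_orient (y i 0) (x i 0)) => + _; case/(_ (Ks i)).
- by rewrite sN.
Qed.

Lemma lifted_cone_pointed : pointed_cone lifted_rows.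
Proof.
move=> z _ z0; rewrite -(homogK z) in z0 *.
have [sN _ sge _] := slack_homog (usubmx z) (dsubmx z 0 0).
have := z0 None; rewrite sN => ->.
suff -> : usubmx z = 0 by apply/matrixP => i j; rewrite !mxE; case: splitP => ? _; rewrite mxE.
apply/matrixP => i j; rewrite ord1 [RHS]mxE.
move: (z0 (Some (inr (inl i)))); rewrite sge /orient_ge => /eqP.
by rewrite mulf_eq0; case: ifP => _; rewrite ?oppr_eq0 oner_eq0 => /eqP.
Qed.

Lemma lifted_ray_normalizable v :
  extreme_ray lifted_rows v ->
  exists2 al, 0 < al & (dsubmx (al *: v) 0 0 = 0 \/ dsubmx (al *: v) 0 0 = 1).
Proof.
move=> [Kv _ _]; rewrite -(homogK v) in Kv.
have [_ _ t0] := proj1 (in_lifted_cone _ _) Kv.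
have tZ al : dsubmx (al *: v) 0 0 = al * dsubmx v 0 0 by rewrite !mxE.
move: t0; rewrite le0r => /orP[/eqP t_eq0 | t_gt0].
  by exists 1; [| left; rewrite tZ t_eq0 mulr0].
by exists (dsubmx v 0 0)^-1; [rewrite invr_gt0 | right; rewrite tZ mulVf ?gt_eqF].
Qed.

Lemma cND_lifted_ray y : extreme_ray lifted_rows (homog y 0) -> cND A y.
Proof.
move=> [Ky y0 ext]; have [Ay yx _] := proj1 (in_lifted_cone _ _) Ky.
have {}y0 : y != 0 by apply: contraNneq y0 => ->; rewrite /homog col_mx0.
split; first by move=> i; rewrite mxE; have := Ay i; rewrite mulr0.
split=> // x1 x2 C1 C2 x1_0 x2_0 x1y x2y yE.
have K x' : rcone A x' -> sign_le x' y -> in_cone lifted_rows (homog x' 0).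
  move=> Cx' x'y; apply/in_lifted_cone; split=> //; last exact: sign_le_trans x'y yx.
  by move=> j; rewrite mulr0; have := Cx' j; rewrite mxE.
have [al x1E] : exists al, homog x1 0 = al *: homog y 0.
  apply: (ext _ (homog x2 0)); [exact: K | exact: K |].
  by rewrite /homog add_col_mx -yE; congr col_mx; apply/matrixP => i j; rewrite !mxE addr0.
have {}x1E : x1 = al *: y by move: x1E; rewrite homogZ => /eq_col_mx[].
have x2E : x2 = (1 - al) *: y by rewrite scalerBl scale1r -x1E yE addrC addKr.
have al_gt0 : 0 < al.
  apply: (sign_le_scale_gt0 y0); last by rewrite -x1E.
  by apply: contraNneq x1_0 => al0; rewrite x1E al0 scale0r.
have al'_gt0 : 0 < 1 - al.
  apply: (sign_le_scale_gt0 y0); last by rewrite -x2E.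
  by apply: contraNneq x2_0 => al0; rewrite x2E al0 scale0r.
by exists (al / (1 - al)); rewrite ?divr_gt0 // x1E x2E scalerA mulfVK ?gt_eqF.
Qed.

Lemma ccND_lifted_ray y : extreme_ray lifted_rows (homog y 1) -> ccND A b y.
Proof.
move=> [Ky _ ext]; have [Ay yx _] := proj1 (in_lifted_cone _ _) Ky.
split; first by move=> i; have := Ay i; rewrite mulr1.
move=> x1 x2 l P1 P2 x1y x2y l_gt0 l_lt1 yE.
have K x' al : 0 <= al -> in_polyhedron A b x' -> sign_le x' y ->
    in_cone lifted_rows (al *: homog x' 1).
  move=> al0 Px' x'y; apply: in_coneZ => //; apply/in_lifted_cone; split=> //.
    by move=> j; rewrite mulr1; apply: Px'.
  exact: sign_le_trans x'y yx.
have [al x1E] : exists al, l *: homog x1 1 = al *: homog y 1.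
  apply: (ext _ ((1 - l) *: homog x2 1)); first exact: K (ltW l_gt0) P1 x1y.
    by apply: K P2 x2y; rewrite subr_ge0 ltW.
  rewrite !homogZ /homog add_col_mx -yE; congr col_mx.
  by apply/matrixP => i j; rewrite !mxE !mulr1 addrC subrK.
move: x1E; rewrite !homogZ !mulr1 => /eq_col_mx[x1E /matrixP/(_ 0 0)].
rewrite !mxE => lE; rewrite -lE in x1E.
have {}x1E : x1 = y by apply: (scalerI (lt0r_neq0 l_gt0)).
have l'0 : 1 - l != 0 by rewrite subr_eq0 eq_sym lt_eqF.
apply: (scalerI l'0); apply: (addrI (l *: y)); rewrite x1E -scalerDl addrC subrK scale1r.
by rewrite {1}yE x1E.
Qed.

End LiftedCone.

Lemma mulmx_sum_col (R : comPzSemiRingType) m n (M : 'M[R]_(m, n)) (c : 'cV[R]_n) :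
  M *m c = \sum_j c j 0 *: col j M.
Proof.
apply/matrixP => a i; rewrite ord1 !mxE summxE.
by apply: eq_bigr => j _; rewrite !mxE mulrC.
Qed.

Lemma col_homog (R : realFieldType) r k (Y : 'M[R]_(r, k)) (t : 'rV[R]_k) j :
  col j (col_mx Y t) = homog (col j Y) (t 0 j).
Proof. by rewrite col_col_mx; congr col_mx; apply/matrixP => i j'; rewrite !ord1 !mxE. Qed.

Section Rank.
Variable F : fieldType.

Lemma mxrankD_le m n (A B : 'M[F]_(m, n)) : (\rank (A + B)%R <= \rank A + \rank B)%N.
Proof.
have sub_adds := addmx_sub_adds (submx_refl A) (submx_refl B).
apply: leq_trans (mxrankS sub_adds) _.
by case: (mxrank_adds_leqif A B).
Qed.

Lemma mxrank_1_sub_rank1 n (u : 'cV[F]_n) (v : 'rV[F]_n) :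
  (n <= \rank (1%:M - u *m v)%R + 1)%N.
Proof.
have := mxrankD_le (1%:M - u *m v) (u *m v); rewrite subrK mxrank1 => /leq_trans; apply.
by rewrite leq_add2l (leq_trans (mxrankM_maxr _ _)) ?rank_leq_row.
Qed.

Lemma mxrank_sumsmx_le n (I : finType) (P : pred I) (B : I -> 'M[F]_n) :
  (\rank (\sum_(i | P i) B i)%MS <= \sum_(i | P i) \rank (B i))%N.
Proof.
apply: (big_rec2 (fun (M : 'M[F]_n) k => \rank M <= k)%N); first by rewrite mxrank0.
move=> i M k _ IH; apply: (@leq_trans (\rank (B i) + \rank M)%N).
  by case: (mxrank_adds_leqif (B i) M).
by rewrite leq_add2l.
Qed.

Lemma mxrank_le_supp_cols k r (D : 'M[F]_(k, r)) (S : {set 'I_r}) :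
  (forall i a, a \notin S -> D i a = 0) -> (\rank D <= #|S|)%N.
Proof.
move=> DS; rewrite -mxrank_tr.
apply: leq_trans (_ : \rank (\sum_(a in S) <<row a D^T>>)%MS <= _)%N.
  apply: mxrankS; apply/row_subP => a.
  have [aS|aS] := boolP (a \in S); first by apply: (sumsmx_sup a) => //; rewrite genmxE.
  have -> : row a D^T = 0 by apply/matrixP => i j; rewrite !mxE DS.
  exact: sub0mx.
apply: leq_trans (mxrank_sumsmx_le _ _) _.
by rewrite -sum1_card; apply: leq_sum => a _; rewrite genmxE rank_leq_row.
Qed.

End Rank.

Section LiftedDecomposition.
Variables (R : realFieldType) (m r : nat) (A : 'M[R]_(m, r)) (b : 'cV[R]_m) (x : 'cV[R]_r).
Variables (k : nat) (Y : 'M[R]_(r, k)) (t : 'rV[R]_k) (c : 'cV[R]_k).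

Record lifted_decomposition : Prop := LiftedDecomposition {
  ld_ray : forall j, extreme_ray (lifted_rows A b x) (homog (col j Y) (t 0 j));
  ld_t01 : forall j, t 0 j = 0 \/ t 0 j = 1;
  ld_c_gt0 : forall j, 0 < c j 0;
  ld_sum : homog x 1 = col_mx Y t *m c;
  ld_free : forall c' : 'cV[R]_k, col_mx Y t *m c' = 0 -> c' = 0 }.

Definition cone_part := [seq c j 0 *: col j Y | j <- enum 'I_k & t 0 j != 1].
Definition point_part := [seq col j Y | j <- enum 'I_k & t 0 j == 1].
Definition point_weight (e : 'cV[R]_r) := \sum_(j | (t 0 j == 1) && (col j Y == e)) c j 0.

Hypothesis dec : lifted_decomposition.
Hypothesis Px : in_polyhedron A b x.

Lemma ld_cone j :
  [/\ forall i, b i 0 * t 0 j <= (A *m col j Y) i 0, sign_le (col j Y) x & 0 <= t 0 j].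
Proof. by have [K _ _] := ld_ray dec j; apply/in_lifted_cone. Qed.

Lemma ld_t0 j : t 0 j != 1 -> t 0 j = 0.
Proof. by case: (ld_t01 dec j) => ->; rewrite ?eqxx. Qed.

Lemma ld_x_sum : x = \sum_j c j 0 *: col j Y.
Proof.
move: (ld_sum dec); rewrite /homog mul_col_mx => /eq_col_mx[-> _].
exact: mulmx_sum_col.
Qed.

Lemma ld_t_sum : \sum_j c j 0 * t 0 j = 1.
Proof.
move: (ld_sum dec); rewrite /homog mul_col_mx => /eq_col_mx[_ /matrixP/(_ 0 0)].
by rewrite !mxE => ->; apply: eq_bigr => j _; rewrite mulrC.
Qed.

Lemma ld_col_free i j al be :
  al *: homog (col i Y) (t 0 i) = be *: homog (col j Y) (t 0 j) -> i != j -> al = 0.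
Proof.
move=> ij_dep ij.
have : col_mx Y t *m (al *: delta_mx i 0 - be *: delta_mx j 0 : 'cV[R]_k) = 0.
  by rewrite mulmxBr -!scalemxAr -!colE !col_homog ij_dep subrr.
move/(ld_free dec)/matrixP/(_ i 0).
by rewrite !mxE !eqxx (negbTE ij) /= mulr1 mulr0 subr0.
Qed.

Lemma ld_point_inj i j : t 0 i = 1 -> t 0 j = 1 -> col i Y = col j Y -> i = j.
Proof.
move=> ti tj ij; apply/eqP; apply: contraT => /(ld_col_free (al := 1) (be := 1)).
by rewrite !scale1r ti tj ij => /(_ erefl) /eqP; rewrite oner_eq0.
Qed.

Lemma cone_part_uniq : uniq cone_part.
Proof.
rewrite map_inj_in_uniq; first by rewrite filter_uniq // enum_uniq.
move=> i j; rewrite !mem_filter => /andP[/ld_t0 ti _] /andP[/ld_t0 tj _] ij.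
apply/eqP; apply: contraT => /(ld_col_free (al := c i 0) (be := c j 0)).
rewrite !homogZ ti tj ij !mulr0 => /(_ erefl) ci0.
by move: (ld_c_gt0 dec i); rewrite ci0 ltxx.
Qed.

Lemma point_part_uniq : uniq point_part.
Proof.
rewrite map_inj_in_uniq; first by rewrite filter_uniq // enum_uniq.
move=> i j; rewrite !mem_filter => /andP[/eqP ti _] /andP[/eqP tj _].
exact: ld_point_inj.
Qed.

Lemma cone_part_cND e : e \in cone_part -> cND A e.
Proof.
case/mapP=> j; rewrite mem_filter => /andP[/ld_t0 tj _] ->.
apply: (@cND_lifted_ray _ _ _ A b x).
by have := extreme_rayZ (ld_c_gt0 dec j) (ld_ray dec j); rewrite homogZ tj mulr0.
Qed.

Lemma point_part_ccND e : e \in point_part -> ccND A b e.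
Proof.
case/mapP=> j; rewrite mem_filter => /andP[/eqP tj _] ->.
by apply: (@ccND_lifted_ray _ _ _ A b x); rewrite -tj; apply: (ld_ray dec).
Qed.

Lemma parts_sign_le e : e \in cone_part ++ point_part -> sign_le e x.
Proof.
rewrite mem_cat => /orP[] /mapP[j _ ->]; have [_ yx _] := ld_cone j => //.
exact: sign_leZ (ld_c_gt0 dec j) yx.
Qed.

Lemma point_weight_ge0 e : 0 <= point_weight e.
Proof. by apply: sumr_ge0 => j _; apply: ltW (ld_c_gt0 dec j). Qed.

Lemma point_weightE j : t 0 j = 1 -> point_weight (col j Y) = c j 0.
Proof.
move=> tj; rewrite /point_weight (big_pred1 j) // => i /=.
by apply/andP/eqP => [[/eqP ti /eqP]|->]; [exact: ld_point_inj | rewrite tj !eqxx].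
Qed.

Lemma point_weight_sum : \sum_(e <- point_part) point_weight e = 1.
Proof.
rewrite big_map big_filter big_enum_cond /= -[RHS]ld_t_sum [RHS](bigID (fun j => t 0 j == 1)) /=.
rewrite [X in _ = _ + X]big1 ?addr0 => [|j /ld_t0 ->]; last by rewrite mulr0.
by apply: eq_bigr => j /eqP tj; rewrite point_weightE // tj mulr1.
Qed.

Lemma parts_sum :
  x = \sum_(e <- cone_part) e + \sum_(e <- point_part) point_weight e *: e.
Proof.
rewrite !big_map !big_filter !big_enum_cond /= {1}ld_x_sum.
rewrite (bigID (fun j => t 0 j == 1)) addrC /=; congr (_ + _).
by apply: eq_bigr => j /eqP tj; rewrite point_weightE.
Qed.

Lemma size_parts : (size (undup (cone_part ++ point_part)) <= k)%N.
Proof.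
apply: leq_trans (size_undup _) _; rewrite size_cat !size_map !size_filter addnC.
by rewrite count_predC size_enum_ord.
Qed.

Lemma ld_point_exists : exists j0, t 0 j0 = 1.
Proof.
apply: NNPP => nopoint; move: ld_t_sum; rewrite big1 => [/eqP|j _].
  by rewrite eq_sym oner_eq0.
by rewrite ld_t0 ?mulr0 //; apply/eqP => tj; apply: nopoint; exists j.
Qed.

(* Row i of diff_mx j0 is y_i - t_i y_j0: a difference of two points of P when
   t_i = 1, and of (x + y_i) and x when t_i = 0. *)
Definition diff_mx j0 : 'M[R]_(k, r) := (1%:M - t^T *m delta_mx 0 j0) *m Y^T.

Lemma diff_mxE j0 i a : diff_mx j0 i a = Y a i - t 0 i * Y a j0.
Proof. by rewrite /diff_mx mulmxBl mul1mx -mulmxA -rowE !mxE big_ord1 !mxE. Qed.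

(* 1 - t^T e_j0 annihilates t^T because t_j0 = 1, and col_mx Y t has
   independent columns, so rank (diff_mx j0) = rank (1 - t^T e_j0) >= k - 1. *)
Lemma size_le_rank_diff j0 : t 0 j0 = 1 -> (k <= \rank (diff_mx j0) + 1)%N.
Proof.
move=> tj0; set N := 1%:M - t^T *m delta_mx 0 j0.
have free : row_free (col_mx Y t)^T.
  apply: inj_row_free => v vM.
  suff /(ld_free dec) : col_mx Y t *m v^T = 0 by move/(congr1 trmx); rewrite trmxK trmx0.
  by rewrite -[LHS]trmxK trmx_mul trmxK vM trmx0.
have Nt : N *m t^T = 0.
  rewrite /N mulmxBl mul1mx -mulmxA -rowE.
  have -> : row j0 t^T = 1%:M by apply/matrixP => i j; rewrite !ord1 !mxE tj0.
  by rewrite mulmx1 subrr.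
have : \rank (N *m (col_mx Y t)^T) = \rank N by rewrite mxrankMfree.
rewrite tr_col_mx mul_mx_row Nt rank_row_mx0 => rkN.
by rewrite /diff_mx -/N rkN mxrank_1_sub_rank1.
Qed.

Lemma size_parts_le_affdim d :
  affdim (in_polyhedron A b) d -> (size (undup (cone_part ++ point_part)) <= d.+1)%N.
Proof.
move=> [_ rank_le]; have [j0 tj0] := ld_point_exists.
have [Aj0 _ _] := ld_cone j0.
pose u i := if t 0 i == 1 then col i Y else x + col i Y.
pose v i := if t 0 i == 1 then col j0 Y else x.
have Puv i : in_polyhedron A b (u i) /\ in_polyhedron A b (v i).
  rewrite /u /v; have [Ai _ _] := ld_cone i.
  case: ifP => [/eqP ti|/negbT /ld_t0 ti].
    by split=> a; [move: (Ai a) | move: (Aj0 a)]; rewrite ?ti ?tj0 mulr1.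
  split=> // a; rewrite mulmxDr mxE; move: (Ai a) (Px a); rewrite ti mulr0; lra.
have diffE : \matrix_(i < k) (u i - v i)^T = diff_mx j0.
  apply/matrixP => i a; rewrite diff_mxE !mxE /u /v.
  by case: ifP => [/eqP ->|/negbT /ld_t0 ->]; rewrite ?mxE; lra.
apply: leq_trans size_parts _; apply: leq_trans (size_le_rank_diff tj0) _.
by rewrite addn1 ltnS -diffE rank_le.
Qed.

Lemma size_parts_le_supp : (size (undup (cone_part ++ point_part)) <= #|supp x| + 1)%N.
Proof.
have [j0 tj0] := ld_point_exists.
apply: leq_trans size_parts _; apply: leq_trans (size_le_rank_diff tj0) _.
rewrite leq_add2r; apply: mxrank_le_supp_cols => i a; rewrite inE negbK => /eqP xa.
have y0 j : Y a j = 0.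
  have [_ yx _] := ld_cone j.
  by case: (yx a) => /eqP; rewrite ?xa ?sgr0 sgr_eq0 mxE => /eqP.
by rewrite diff_mxE !y0 mulr0 subr0.
Qed.

End LiftedDecomposition.

Lemma exists_lifted_decomposition (R : realFieldType) m r (A : 'M[R]_(m, r)) b x :
  in_polyhedron A b x ->
  exists k (Y : 'M[R]_(r, k)) (t : 'rV[R]_k) (c : 'cV[R]_k), lifted_decomposition A b x Y t c.
Proof.
move=> Px; have Kx : in_cone (lifted_rows A b x) (homog x 1).
  apply/in_lifted_cone; split; last exact: ler01; last exact: sign_le_refl.
  by move=> j; rewrite mulr1; apply: Px.
have [k [M [c [rayM c_gt0 xE freeM _]]]] :=
  ray_decomposition_cone (normal := fun v => dsubmx v 0 0 = 0 \/ dsubmx v 0 0 = 1)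
    (@lifted_cone_pointed _ _ _ A b x) (@lifted_ray_normalizable _ _ _ A b x) Kx.
rewrite -[M]vsubmxK in rayM xE freeM.
exists k, (usubmx M), (dsubmx M), c; split=> // j.
- by have [] := rayM j; rewrite col_homog.
- by have [_] := rayM j; rewrite col_homog /homog col_mxKd !mxE.
Qed.

Theorem theorem3 (R : realFieldType) (m r : nat) (A : 'M[R]_(m, r)) (b : 'cV[R]_m)
    (x : 'cV[R]_r) :
  in_polyhedron A b x ->
  exists (E0 E1 : seq 'cV[R]_r) (lam : 'cV[R]_r -> R),
    uniq E0 /\ uniq E1 /\
    (forall e, e \in E0 -> cND A e) /\
    (forall e, e \in E1 -> ccND A b e) /\
    (forall e, e \in E0 ++ E1 -> sign_le e x) /\
    (forall e, e \in E1 -> 0 <= lam e) /\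
    \sum_(e <- E1) lam e = 1 /\
    x = \sum_(e <- E0) e + \sum_(e <- E1) lam e *: e /\
    (forall d, affdim (in_polyhedron A b) d -> (size (undup (E0 ++ E1)) <= d.+1)%N) /\
    (size (undup (E0 ++ E1)) <= #|supp x| + #|supp (A *m x)| + 1)%N.
Proof.
move=> Px; have [k [Y [t [c dec]]]] := exists_lifted_decomposition Px.
exists (cone_part Y t c), (point_part Y t), (point_weight Y t c).
split; first exact: cone_part_uniq dec.
split; first exact: point_part_uniq dec.
split; first exact: cone_part_cND dec.
split; first exact: point_part_ccND dec.
split; first exact: parts_sign_le dec.
split; first by move=> e _; apply: point_weight_ge0 dec e.
split; first exact: point_weight_sum dec.
split; first exact: parts_sum dec.
split; first by move=> d; apply: (size_parts_le_affdim dec Px).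
by rewrite (leq_trans (size_parts_le_supp dec)) // leq_add2r leq_addr.
Qed.
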